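(* Consider a Fisher market with $n$ buyers and $m$ items, each item having supply $1$. Buyer $i$ has budget $B_i\ge 0$, valuations $v_{ij}\ge 0$, and a hard demand $d_i\ge 0$; for a bundle $x_i\in\mathbb{R}^m_{\ge 0}$ let $u_i(x_i)=\sum_j v_{ij}x_{ij}-d_i$. Assume there exists an allocation $x\ge 0$ with $\sum_i x_{ij}\le 1$ for all $j$ and $u_i(x_i)>0$ for all $i$. Let $x$ be an optimal solution of $$\max_{x\ge 0}\sum_i B_i\log\Big(\sum_j v_{ij}x_{ij}-d_i\Big)\quad\text{s.t.}\quad \sum_i x_{ij}\le 1\ \ \forall j,$$ and let $p=(p_j)\ge 0$ be the optimal dual variables of the supply constraints (satisfying the KKT conditions together with $x$). Define, for each buyer $i$, the demand set with respect to demand-inflated budgets $$D_i(p)=\arg\max_{x_i\ge 0}\Big\{u_i(x_i)\ \Big|\ \sum_j p_j x_{ij}\le B_i\Big(1+\frac{d_i}{u_i(x_i)}\Big)\Big\}.$$ Then $(x,p)$ is a market equilibrium in the following sense: (1) $x_i\in D_i(p)$ for every buyer $i$; and (2) every item $j$ with $p_j>0$ is exactly allocated, i.e. $\sum_i x_{ij}=1$. *)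

From mathcomp Require Import all_boot all_order all_algebra.
From mathcomp Require Import all_classical all_reals all_analysis.
Set Implicit Arguments. Unset Strict Implicit. Unset Printing Implicit Defensive.
Import Order.TTheory GRing.Theory Num.Theory.
Local Open Scope ring_scope.

Section Fisher.
Variables (R : realType) (n m : nat).
Variables (v : 'I_n -> 'I_m -> R) (d : 'I_n -> R) (B : 'I_n -> R).

Definition util (i : 'I_n) (xi : 'I_m -> R) : R :=
  \sum_(j < m) v i j * xi j - d i.

Definition feasible (x : 'I_n -> 'I_m -> R) : Prop :=
  (forall i j, 0 <= x i j) /\ (forall j, \sum_(i < n) x i j <= 1).

Definition eg_obj (x : 'I_n -> 'I_m -> R) : R :=
  \sum_(i < n) B i * ln (util i (x i)).

Definition eg_optimal (x : 'I_n -> 'I_m -> R) : Prop :=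
  [/\ feasible x, (forall i, 0 < util i (x i)) &
      forall y, feasible y -> (forall i, 0 < util i (y i)) ->
        eg_obj y <= eg_obj x].

(* KKT conditions for x together with the dual prices p of the supply
   constraints: dual feasibility, complementary slackness, stationarity. *)
Definition eg_KKT (x : 'I_n -> 'I_m -> R) (p : 'I_m -> R) : Prop :=
  [/\ (forall j, 0 <= p j),
      (forall j, p j * (1 - \sum_(i < n) x i j) = 0),
      (forall i j, B i * v i j / util i (x i) <= p j) &
      (forall i j, x i j * (p j - B i * v i j / util i (x i)) = 0)].

Definition in_budget (p : 'I_m -> R) (i : 'I_n) (xi : 'I_m -> R) : Prop :=
  \sum_(j < m) p j * xi j <= B i * (1 + d i / util i xi).

(* xi belongs to the demand set D_i(p) (bundles restricted to the
   log-domain u_i > 0, where the inflated budget is meaningful) *)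
Definition in_demand_set (p : 'I_m -> R) (i : 'I_n) (xi : 'I_m -> R) : Prop :=
  [/\ (forall j, 0 <= xi j), 0 < util i xi, in_budget p i xi &
      forall yi : 'I_m -> R, (forall j, 0 <= yi j) -> 0 < util i yi ->
        in_budget p i yi -> util i yi <= util i xi].

End Fisher.

(* The equilibrium is read off the KKT conditions alone; optimality of x only
   supplies feasibility and u_i(x_i) > 0.  Complementary slackness on the
   supply constraints gives market clearing.  Stationarity says p_j equals the
   bang-per-buck B_i v_ij / u_i(x_i) wherever x_ij > 0 and dominates it
   elsewhere, so buyer i spends exactly B_i (u_i(x_i) + d_i) / u_i(x_i), which
   is the inflated budget at x_i, while any bundle y_i costs at least
   B_i (u_i(y_i) + d_i) / u_i(x_i).  If y_i is affordable, comparing the two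
   against B_i (u_i(y_i) + d_i) / u_i(y_i) forces u_i(y_i) <= u_i(x_i). *)
From mathcomp Require Import all_boot all_order all_algebra.
From mathcomp Require Import all_classical all_reals all_analysis.
Set Implicit Arguments. Unset Strict Implicit. Unset Printing Implicit Defensive.
Import Order.TTheory GRing.Theory Num.Theory.
Local Open Scope ring_scope.

Section KKTEquilibrium.
Variables (R : realType) (n m : nat).
Variables (v : 'I_n -> 'I_m -> R) (d B : 'I_n -> R).
Variables (x : 'I_n -> 'I_m -> R) (p : 'I_m -> R).
Hypothesis KKT : eg_KKT v d B x p.

Lemma KKT_market_clearing j : 0 < p j -> \sum_(i < n) x i j = 1.
Proof.
case: KKT => _ slack _ _ pj_gt0; have /eqP := slack j.
by rewrite mulf_eq0 gt_eqF //= subr_eq0 => /eqP <-.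
Qed.

Lemma sum_valuationE i (y : 'I_m -> R) :
  \sum_(j < m) v i j * y j = util v d i y + d i.
Proof. by rewrite subrK. Qed.

Lemma inflated_budgetE i (y : 'I_m -> R) : util v d i y != 0 ->
  B i * (1 + d i / util v d i y) = B i * (util v d i y + d i) / util v d i y.
Proof. by move=> u_neq0; rewrite -mulrA mulrDl divff. Qed.

Lemma KKT_spending i : util v d i (x i) != 0 ->
  \sum_(j < m) p j * x i j =
    B i * (util v d i (x i) + d i) / util v d i (x i).
Proof.
case: KKT => _ _ _ stationary u_neq0.
have p_bang_per_buck j : p j * x i j = B i * v i j / util v d i (x i) * x i j.
  have /eqP := stationary i j; rewrite mulf_eq0 subr_eq0.
  by case/orP=> /eqP ->; rewrite ?mulr0.
rewrite (eq_bigr _ (fun j _ => p_bang_per_buck j)) -sum_valuationE.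
rewrite mulr_sumr mulr_suml; apply: eq_bigr => j _.
by rewrite mulrA mulrAC.
Qed.

Lemma KKT_cost_lower_bound i (y : 'I_m -> R) : (forall j, 0 <= y j) ->
  B i * (util v d i y + d i) / util v d i (x i) <= \sum_(j < m) p j * y j.
Proof.
case: KKT => _ _ dominated _ y_ge0.
rewrite -sum_valuationE mulr_sumr mulr_suml ler_sum // => j _.
by rewrite mulrA mulrAC ler_wpM2r.
Qed.

Lemma KKT_in_demand_set i : 0 < B i -> 0 <= d i ->
  (forall j, 0 <= x i j) -> 0 < util v d i (x i) ->
  in_demand_set v d B p i (x i).
Proof.
move=> B_gt0 d_ge0 x_ge0 u_gt0.
split=> //; first by rewrite /in_budget inflated_budgetE ?KKT_spending ?gt_eqF.
move=> y y_ge0 uy_gt0; rewrite /in_budget inflated_budgetE ?gt_eqF // => afford.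
have uy_d_gt0 : 0 < util v d i y + d i by rewrite ltr_wpDr.
have := le_trans (KKT_cost_lower_bound i y_ge0) afford.
by rewrite ler_pM2l ?mulr_gt0 // lef_pV2 ?posrE.
Qed.

End KKTEquilibrium.

Theorem theorem1 (R : realType) (n m : nat)
    (v : 'I_n -> 'I_m -> R) (d : 'I_n -> R) (B : 'I_n -> R)
    (x : 'I_n -> 'I_m -> R) (p : 'I_m -> R) :
  (forall i, 0 < B i) ->
  (forall i j, 0 <= v i j) ->
  (forall i, 0 <= d i) ->
  (exists x0, feasible x0 /\ forall i, 0 < util v d i (x0 i)) ->
  eg_optimal v d B x ->
  eg_KKT v d B x p ->
  (forall i, in_demand_set v d B p i (x i)) /\
  (forall j, 0 < p j -> \sum_(i < n) x i j = 1).
Proof.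
move=> B_gt0 _ d_ge0 _ [[x_ge0 _] u_gt0 _] kkt.
split=> [i | j]; last exact: (KKT_market_clearing kkt).
exact: (KKT_in_demand_set kkt (B_gt0 i) (d_ge0 i) (x_ge0 i) (u_gt0 i)).
Qed.
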